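(* Let $W,V$ be B-DMCs, $N=2^n$, $i\in\{1,\dots,N\}$, and let $y_1^{2N}$ be distributed according to $W(y_1^{2N}|0_1^{2N})=W(y_1^N|0_1^N)W(y_{N+1}^{2N}|0_1^N)$. Write $L_1=L_{V_N^{(i)}}(y_1^N)$. For $j\in\{2i-1,2i\}$ and $\bowtie\in\{\ge,\le\}$ define, for $b\in\{0,1\}$, $g^{\bowtie}_j(b)=\mathbb E_W\big[\mathbf 1\{L_{V_{2N}^{(j)}}(y_1^{2N})\bowtie1\}\,\big|\,\mathbf 1\{L_1\bowtie1\}=b\big]$ (whenever the conditioning event has positive probability). Then: (a) $g^{\ge}_{2i}(1)\ge g^{\ge}_{2i}(0)$ and $g^{\le}_{2i}(1)\ge g^{\le}_{2i}(0)$; (b) if $\mathbb P_W[L_{V_N^{(i)}}(y_1^N)\le1]\ge\mathbb P_W[L_{V_N^{(i)}}(y_1^N)\ge1]$, then $g^{\ge}_{2i-1}(1)\ge g^{\ge}_{2i-1}(0)$ and $g^{\le}_{2i-1}(1)\ge g^{\le}_{2i-1}(0)$.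
   Context: A B-DMC $W:\{0,1\}\to\mathcal Y$ is given by transition probabilities $W(y|x)$, $\mathcal Y$ finite; $L_W(y)=W(y|1)/W(y|0)$. For a B-DMC $W$: $W^-(y_1y_2|u_1)=\sum_{u_2}\tfrac12W(y_1|u_1\oplus u_2)W(y_2|u_2)$, $W^+(y_1y_2u_1|u_2)=\tfrac12W(y_1|u_1\oplus u_2)W(y_2|u_2)$. Synthetic channels: $W_1^{(1)}=W$, $W_{2N}^{(2i-1)}=(W_N^{(i)})^-$, $W_{2N}^{(2i)}=(W_N^{(i)})^+$; an output of $V_N^{(i)}$ is written $(y_1^N,u_1^{i-1})$ as in Arıkan's construction and $L_{V_N^{(i)}}(y_1^N):=L_{V_N^{(i)}}(y_1^N,0_1^{i-1})$. With $L_1=L_{V_N^{(i)}}(y_1^N)$, $L_2=L_{V_N^{(i)}}(y_{N+1}^{2N})$: $L_{V_{2N}^{(2i-1)}}(y_1^{2N})=\frac{L_1+L_2}{1+L_1L_2}$, $L_{V_{2N}^{(2i)}}(y_1^{2N})=L_1L_2$. Notation: $W(y_1^N|0_1^N)=\prod_jW(y_j|0)$, $\mathbb P_W[E]=\sum_{y_1^N}W(y_1^N|0_1^N)\mathbf 1\{E\}$. *)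

From HB Require Import structures.
From mathcomp Require Import all_boot all_order all_algebra.
Set Implicit Arguments. Unset Strict Implicit. Unset Printing Implicit Defensive.
Import Order.TTheory GRing.Theory Num.Theory.
Local Open Scope ring_scope.

(* A binary-input channel: an output type and transition probabilities
   tp y u = W(y|u)  (input bit u : bool, false = 0, true = 1). *)
Record chan (R : Type) := Chan { out : Type ; tp : out -> bool -> R }.
Arguments tp {R} c _ _.

Definition is_bdmc (R : realFieldType) (Y : finType) (W : Y -> bool -> R) :=
  (forall y u, 0 <= W y u) /\ (forall u, \sum_(y : Y) W y u = 1).

Definition chan_minus (R : realFieldType) (C : chan R) : chan R :=
  @Chan R (out C * out C)
    (fun y u1 => \sum_(u2 : bool) 2^-1 * tp C y.1 (addb u1 u2) * tp C y.2 u2).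

Definition chan_plus (R : realFieldType) (C : chan R) : chan R :=
  @Chan R (out C * out C * bool)
    (fun y u2 => 2^-1 * tp C y.1.1 (addb y.2 u2) * tp C y.1.2 u2).

(* synth C n k = C_N^{(k+1)} with N = 2^n (0-based index k):
   C_{2N}^{(2i-1)} = (C_N^{(i)})^-,  C_{2N}^{(2i)} = (C_N^{(i)})^+. *)
Fixpoint synth (R : realFieldType) (C : chan R) (n k : nat) : chan R :=
  match n with
  | 0 => C
  | n'.+1 => if odd k then chan_plus (synth C n' k./2)
             else chan_minus (synth C n' k./2)
  end.

Lemma pow2_gt0 (n : nat) : (0 < 2 ^ n)%N.
Proof. by rewrite expn_gt0. Qed.

Lemma lo_proof (n : nat) (j : 'I_(2 ^ n)) : (j < 2 ^ n.+1)%N.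
Proof.
by apply: (leq_trans (ltn_ord j)); rewrite expnS mul2n -addnn leq_addr.
Qed.

Lemma hi_proof (n : nat) (j : 'I_(2 ^ n)) : (j + 2 ^ n < 2 ^ n.+1)%N.
Proof. by rewrite expnS mul2n -addnn ltn_add2r. Qed.

Definition lo (n : nat) (j : 'I_(2 ^ n)) : 'I_(2 ^ n.+1) := Ordinal (lo_proof j).
Definition hi (n : nat) (j : 'I_(2 ^ n)) : 'I_(2 ^ n.+1) := Ordinal (hi_proof j).

(* The output (y_1^N, 0_1^{i-1}) of C_N^{(i)}, as an element of the output
   type of synth C n (i-1). *)
Fixpoint zout (R : realFieldType) (C : chan R) (n k : nat) :
  ('I_(2 ^ n) -> out C) -> out (synth C n k) :=
  match n return ('I_(2 ^ n) -> out C) -> out (synth C n k) with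
  | 0 => fun y => y (Ordinal (pow2_gt0 0))
  | n'.+1 => fun y =>
      let z1 := @zout R C n' k./2 (fun j => y (lo j)) in
      let z2 := @zout R C n' k./2 (fun j => y (hi j)) in
      (if odd k as b
          return out (if b then chan_plus (synth C n' k./2)
                      else chan_minus (synth C n' k./2))
       then (z1, z2, false) else (z1, z2))
  end.

Arguments zout {R} C n k y.

(* Comparisons of a likelihood ratio L_C(z) = C(z|1)/C(z|0) with 1, in the
   usual extended sense (L = +oo when C(z|0) = 0 < C(z|1)):
   L >= 1  iff  C(z|1) >= C(z|0);   L <= 1  iff  C(z|1) <= C(z|0). *)
Definition lr_ge1 (R : realFieldType) (C : chan R) (z : out C) : bool :=
  tp C z false <= tp C z true.
Definition lr_le1 (R : realFieldType) (C : chan R) (z : out C) : bool :=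
  tp C z true <= tp C z false.

Definition Lge (R : realFieldType) (Y : finType) (V : Y -> bool -> R)
  (n k : nat) (y : 'I_(2 ^ n) -> Y) : bool :=
  lr_ge1 (@zout R (@Chan R Y V) n k y).
Definition Lle (R : realFieldType) (Y : finType) (V : Y -> bool -> R)
  (n k : nat) (y : 'I_(2 ^ n) -> Y) : bool :=
  lr_le1 (@zout R (@Chan R Y V) n k y).

Arguments Lge {R Y} V n k y.
Arguments Lle {R Y} V n k y.

Definition first_half (Y : Type) (n : nat) (y : 'I_(2 ^ n.+1) -> Y) :
  'I_(2 ^ n) -> Y := fun j => y (lo j).

Definition prob (R : realFieldType) (Y : finType) (W : Y -> bool -> R)
  (n : nat) (E : pred {ffun 'I_(2 ^ n) -> Y}) : R :=
  \sum_(y : {ffun 'I_(2 ^ n) -> Y} | E y) \prod_(j < 2 ^ n) W (y j) false.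

Arguments prob {R Y} W n E.

Definition gcond (R : realFieldType) (Y : finType) (W : Y -> bool -> R)
  (n : nat) (A B : pred {ffun 'I_(2 ^ n) -> Y}) (b : bool) : R :=
  prob W n (fun y => A y && (B y == b)) / prob W n (fun y => B y == b).

Arguments gcond {R Y} W n A B b.

Definition cond_pos (R : realFieldType) (Y : finType) (W : Y -> bool -> R)
  (n : nat) (B : pred {ffun 'I_(2 ^ n) -> Y}) (b : bool) : Prop :=
  0 < prob W n (fun y => B y == b).
Arguments cond_pos {R Y} W n B b.
Arguments first_half {Y n} y _.

From HB Require Import structures.
From mathcomp Require Import all_boot all_order all_algebra.
From mathcomp Require Import ring zify.
Import Order.TTheory GRing.Theory Num.Theory.
Set Implicit Arguments. Unset Strict Implicit.
Local Open Scope ring_scope.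

(* Under W^{2N}(.|0) the halves x1 = y_1^N and x2 = y_{N+1}^{2N} of the output
   are independent with law W^N(.|0), and the conditioning event only depends
   on x1.  Hence g_j(b) is the average, over the x1 with 1{B(x1)} = b, of the
   sectional probabilities S(x1) = P_W[A(x1, .)] (lemma [gcond_halves]).  If
   S(x1') <= S(x1) whenever B(x1) holds and B(x1') fails, the average over
   {B = 1} dominates the average over {B = 0} ([cond_mean_mono]).

   Writing a_u, b_u for the likelihoods V_N^{(i)}(x1, 0 | u), V_N^{(i)}(x2, 0 | u),
   the events at level 2N read ([Lge_plus] ... [Lle_minus])
     j = 2i   :  {L >= 1} = {a_0 b_0 <= a_1 b_1},
     j = 2i-1 :  {L >= 1} = {(a_1 - a_0)(b_1 - b_0) <= 0},
   and symmetrically for {L <= 1}.  For j = 2i the sections are nested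
   pointwise; for j = 2i-1 they are sandwiched between {L(x2) >= 1} and
   {L(x2) <= 1}, which is where the hypothesis of (b) enters. *)

Section Halves.
Variable Y : finType.

Lemma two_pow_succ (n : nat) : (2 ^ n.+1 = 2 ^ n + 2 ^ n)%N.
Proof. by rewrite expnS mul2n addnn. Qed.

Definition left_half n (y : {ffun 'I_(2 ^ n.+1) -> Y}) : {ffun 'I_(2 ^ n) -> Y} :=
  [ffun j => y (lo j)].
Definition right_half n (y : {ffun 'I_(2 ^ n.+1) -> Y}) : {ffun 'I_(2 ^ n) -> Y} :=
  [ffun j => y (hi j)].
Definition join_halves n (x1 x2 : {ffun 'I_(2 ^ n) -> Y}) :
    {ffun 'I_(2 ^ n.+1) -> Y} :=
  [ffun k => match split (cast_ord (two_pow_succ n) k) with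
             | inl j => x1 j | inr j => x2 j end].

Lemma cast_lo n (j : 'I_(2 ^ n)) : cast_ord (two_pow_succ n) (lo j) = unsplit (inl j).
Proof. exact: val_inj. Qed.
Lemma cast_hi n (j : 'I_(2 ^ n)) : cast_ord (two_pow_succ n) (hi j) = unsplit (inr j).
Proof. by apply: val_inj; rewrite /= addnC. Qed.

Lemma left_join n x1 x2 : left_half (@join_halves n x1 x2) = x1.
Proof. by apply/ffunP => j; rewrite !ffunE cast_lo unsplitK. Qed.
Lemma right_join n x1 x2 : right_half (@join_halves n x1 x2) = x2.
Proof. by apply/ffunP => j; rewrite !ffunE cast_hi unsplitK. Qed.
Lemma join_halvesK n y : @join_halves n (left_half y) (right_half y) = y.
Proof.
apply/ffunP => k; rewrite !ffunE.
case: splitP => j /= hj; rewrite ffunE; congr (y _); apply: val_inj => //=.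
by rewrite hj addnC.
Qed.

Lemma sum_halves (R : nmodType) n (G : {ffun 'I_(2 ^ n.+1) -> Y} -> R) :
  \sum_y G y = \sum_x1 \sum_x2 G (@join_halves n x1 x2).
Proof.
rewrite pair_big /= (reindex (fun p => join_halves p.1 p.2)) //.
apply: onW_bij; exists (fun y => (left_half y, right_half y)) => [[x1 x2]|y] /=.
  by rewrite left_join right_join.
by rewrite join_halvesK.
Qed.

End Halves.

Section ProductLaw.
Variables (R : realFieldType) (Y : finType) (W : Y -> bool -> R).
Hypothesis W_bdmc : is_bdmc W.

Definition weight n (x : {ffun 'I_(2 ^ n) -> Y}) : R := \prod_(j < 2 ^ n) W (x j) false.

Lemma weight_ge0 n x : 0 <= @weight n x.
Proof. by case: W_bdmc => W_ge0 _; apply: prodr_ge0 => j _. Qed.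

Lemma prob_total n : prob W n predT = 1.
Proof.
case: W_bdmc => _ W_sum1.
rewrite /prob -(bigA_distr_bigA (fun (j : 'I_(2 ^ n)) (y : Y) => W y false)).
by rewrite big1.
Qed.

Lemma prob_sub n (E F : pred {ffun 'I_(2 ^ n) -> Y}) :
  (forall x, E x -> F x) -> prob W n E <= prob W n F.
Proof.
move=> EF; rewrite /prob [leRHS]big_mkcond [leLHS]big_mkcond.
apply: ler_sum => x _; case Ex: (E x); first by rewrite EF.
by case: (F x) => //; exact: weight_ge0.
Qed.

Lemma weight_join n x1 x2 : weight (@join_halves _ n x1 x2) = weight x1 * weight x2.
Proof.
rewrite /weight (reindex (cast_ord (esym (two_pow_succ n)))) /=; last first.
  by apply: onW_bij; exists (cast_ord (two_pow_succ n)) => k;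
    rewrite ?cast_ordK ?cast_ordKV.
rewrite big_split_ord /=; congr (_ * _); apply: eq_bigr => j _.
  by rewrite ffunE cast_ordKV (@unsplitK (2 ^ n) (2 ^ n) (inl j)).
by rewrite ffunE cast_ordKV (@unsplitK (2 ^ n) (2 ^ n) (inr j)).
Qed.

Lemma prob_halves n (Q : {ffun 'I_(2 ^ n) -> Y} -> pred {ffun 'I_(2 ^ n) -> Y}) :
  prob W n.+1 (fun y => Q (left_half y) (right_half y)) =
  \sum_x1 weight x1 * prob W n (Q x1).
Proof.
rewrite /prob big_mkcond sum_halves; apply: eq_bigr => x1 _.
rewrite big_distrr [RHS]big_mkcond; apply: eq_bigr => x2 _.
rewrite left_join right_join.
change (\prod_(j < 2 ^ n.+1) W (join_halves x1 x2 j) false)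
  with (weight (join_halves x1 x2)).
by rewrite weight_join; case: (Q x1 x2); rewrite ?mulr0.
Qed.

Lemma prob_left_half n (E : pred {ffun 'I_(2 ^ n) -> Y}) :
  prob W n.+1 (fun y => E (left_half y)) = prob W n E.
Proof.
rewrite (prob_halves (fun x1 _ => E x1)) [RHS]/prob [RHS]big_mkcond.
apply: eq_bigr => x1 _; case: (E x1); first by rewrite prob_total mulr1.
by rewrite /prob big_pred0 ?mulr0.
Qed.

Lemma gcond_halves n (A : {ffun 'I_(2 ^ n) -> Y} -> pred {ffun 'I_(2 ^ n) -> Y})
    (B : pred {ffun 'I_(2 ^ n) -> Y}) b :
  gcond W n.+1 (fun y => A (left_half y) (right_half y)) (fun y => B (left_half y)) b =
  (\sum_(x1 | B x1 == b) weight x1 * prob W n (A x1)) / prob W n (fun x => B x == b).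
Proof.
rewrite /gcond (prob_left_half (fun x => B x == b)); congr (_ / _).
rewrite (prob_halves (fun x1 x2 => A x1 x2 && (B x1 == b))) [RHS]big_mkcond.
apply: eq_bigr => x1 _; case: (B x1 == b).
  by congr (_ * _); apply: eq_bigl => x2; rewrite andbT.
by rewrite /prob big_pred0 ?mulr0 // => x2; rewrite andbF.
Qed.

End ProductLaw.

Lemma cond_mean_mono (R : realFieldType) (T : finType) (p S : T -> R) (B : pred T) :
  (forall x, 0 <= p x) ->
  0 < \sum_(x | B x == true) p x -> 0 < \sum_(x | B x == false) p x ->
  (forall x x', B x -> ~~ B x' -> S x' <= S x) ->
  (\sum_(x | B x == false) p x * S x) / (\sum_(x | B x == false) p x) <=
  (\sum_(x | B x == true) p x * S x) / (\sum_(x | B x == true) p x).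
Proof.
move=> p_ge0 pos1 pos0 S_sep.
rewrite ler_pdivrMr // mulrAC ler_pdivlMr // !big_distrl /=.
under eq_bigr do rewrite big_distrr.
under [leRHS]eq_bigr do rewrite big_distrr.
rewrite [leRHS]exchange_big /=; apply: ler_sum => x' /eqP B'; apply: ler_sum => x /eqP Bx.
have le_S : S x' <= S x by apply: S_sep; rewrite ?Bx ?B'.
rewrite mulrAC [leRHS]mulrC mulrA; apply: ler_wpM2l => //.
by rewrite mulrC mulr_ge0.
Qed.

Lemma gcond_left_half_mono (R : realFieldType) (Y : finType) (W : Y -> bool -> R) n
    (A0 B0 : pred {ffun 'I_(2 ^ n.+1) -> Y})
    (A : {ffun 'I_(2 ^ n) -> Y} -> pred {ffun 'I_(2 ^ n) -> Y})
    (B : pred {ffun 'I_(2 ^ n) -> Y}) :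
  is_bdmc W ->
  (forall y, A0 y = A (left_half y) (right_half y)) ->
  (forall y, B0 y = B (left_half y)) ->
  (forall x x', B x -> ~~ B x' -> prob W n (A x') <= prob W n (A x)) ->
  cond_pos W n.+1 B0 true -> cond_pos W n.+1 B0 false ->
  gcond W n.+1 A0 B0 false <= gcond W n.+1 A0 B0 true.
Proof.
move=> W_bdmc A0E B0E A_sep.
have B0b b : prob W n.+1 (fun y => B0 y == b) = prob W n (fun x => B x == b).
  by rewrite -(prob_left_half W_bdmc (fun x => B x == b)); apply: eq_bigl => y; rewrite B0E.
have gcondE b : gcond W n.+1 A0 B0 b =
    gcond W n.+1 (fun y => A (left_half y) (right_half y)) (fun y => B (left_half y)) b.
  by rewrite /gcond /prob; congr (_ / _); apply: eq_bigl => y; rewrite ?A0E B0E.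
rewrite /cond_pos !B0b => pos1 pos0; rewrite !gcondE !gcond_halves //.
by apply: cond_mean_mono => // x; exact: weight_ge0.
Qed.

Section Likelihood.
Variables (R : realFieldType) (Y : finType) (V : Y -> bool -> R).
Local Notation C := (@Chan R Y V).

Definition lik n k u (x : 'I_(2 ^ n) -> Y) : R := tp (synth C n k) (zout C n k x) u.
Arguments lik : clear implicits.

Lemma Lge_lik n k x : Lge V n k x = (lik n k false x <= lik n k true x).
Proof. by []. Qed.
Lemma Lle_lik n k x : Lle V n k x = (lik n k true x <= lik n k false x).
Proof. by []. Qed.

Lemma zout_ext n k (x x' : 'I_(2 ^ n) -> Y) :
  (forall j, x j = x' j) -> zout C n k x = zout C n k x'.
Proof.
elim: n k x x' => [|n IH] k x x' xx' /=; first by rewrite xx'.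
by rewrite (IH _ _ (fun j => x' (lo j))) // (IH _ (fun j => x (hi j)) (fun j => x' (hi j))).
Qed.

Lemma lik_ge0 n k u x : (forall y u, 0 <= V y u) -> 0 <= lik n k u x.
Proof.
move=> V_ge0; rewrite /lik; move: (zout C n k x) u; clear x.
elim: n k => [|n IH] k //=; case: (odd k) => z u /=.
  by rewrite !mulr_ge0 // invr_ge0 ler0n.
by apply: sumr_ge0 => u2 _; rewrite !mulr_ge0 // invr_ge0 ler0n.
Qed.

Lemma lik_step n k u (y : {ffun 'I_(2 ^ n.+1) -> Y}) :
  lik n.+1 k u y =
  if odd k then 2^-1 * lik n k./2 u (left_half y) * lik n k./2 u (right_half y)
  else 2^-1 * lik n k./2 u (left_half y) * lik n k./2 false (right_half y)
     + 2^-1 * lik n k./2 (~~ u) (left_half y) * lik n k./2 true (right_half y).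
Proof.
have leftE : zout C n k./2 (left_half y) = zout C n k./2 (fun j => y (lo j)).
  by apply: zout_ext => j; rewrite ffunE.
have rightE : zout C n k./2 (right_half y) = zout C n k./2 (fun j => y (hi j)).
  by apply: zout_ext => j; rewrite ffunE.
rewrite /lik leftE rightE /=; case: (odd k) => //=.
by rewrite big_bool /= addbT addbF addrC.
Qed.

Lemma Lge_left_half n k (y : {ffun 'I_(2 ^ n.+1) -> Y}) :
  Lge V n k (first_half y) = Lge V n k (left_half y).
Proof. by rewrite /Lge (@zout_ext n k _ (left_half y)) // => j; rewrite ffunE. Qed.
Lemma Lle_left_half n k (y : {ffun 'I_(2 ^ n.+1) -> Y}) :
  Lle V n k (first_half y) = Lle V n k (left_half y).
Proof. by rewrite /Lle (@zout_ext n k _ (left_half y)) // => j; rewrite ffunE. Qed.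

Lemma half_cancel (a b c d : R) : (2^-1 * a * b <= 2^-1 * c * d) = (a * b <= c * d).
Proof. by rewrite -!mulrA ler_pM2l // invr_gt0 ltr0n. Qed.

Definition delta n k (x : 'I_(2 ^ n) -> Y) : R := lik n k true x - lik n k false x.
Arguments delta : clear implicits.

Lemma Lge_delta n k x : Lge V n k x = (0 <= delta n k x).
Proof. by rewrite Lge_lik subr_ge0. Qed.
Lemma Lle_delta n k x : Lle V n k x = (delta n k x <= 0).
Proof. by rewrite Lle_lik subr_le0. Qed.

Section Step.
Variables (n m : nat) (y : {ffun 'I_(2 ^ n.+1) -> Y}).
Local Notation a u := (lik n m u (left_half y)).
Local Notation b u := (lik n m u (right_half y)).

Lemma Lge_plus : Lge V n.+1 m.*2.+1 y = (a false * b false <= a true * b true).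
Proof. by rewrite Lge_lik !lik_step /= odd_double uphalf_double half_cancel. Qed.
Lemma Lle_plus : Lle V n.+1 m.*2.+1 y = (a true * b true <= a false * b false).
Proof. by rewrite Lle_lik !lik_step /= odd_double uphalf_double half_cancel. Qed.

Lemma Lge_minus :
  Lge V n.+1 m.*2 y = (delta n m (left_half y) * delta n m (right_half y) <= 0).
Proof.
rewrite Lge_lik !lik_step odd_double doubleK /= -subr_ge0.
rewrite [leRHS](_ : _ = 2^-1 * - (delta n m (left_half y) * delta n m (right_half y))).
  by rewrite pmulr_rge0 ?invr_gt0 ?ltr0n // oppr_ge0.
by rewrite /delta; ring.
Qed.
Lemma Lle_minus :
  Lle V n.+1 m.*2 y = (0 <= delta n m (left_half y) * delta n m (right_half y)).
Proof.
rewrite Lle_lik !lik_step odd_double doubleK /= -subr_ge0.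
rewrite [leRHS](_ : _ = 2^-1 * (delta n m (left_half y) * delta n m (right_half y))).
  by rewrite pmulr_rge0 ?invr_gt0 ?ltr0n.
by rewrite /delta; ring.
Qed.

End Step.
End Likelihood.

Arguments lik {R Y} V n k u x.
Arguments delta {R Y} V n k x.

(* If a product inequality c_0 b_0 <= c_1 b_1 holds for a "wrong-way" pair
   c_1 < c_0, then b_0 <= b_1, hence it holds for every pair a_0 <= a_1. *)
Lemma mul_le_transfer (R : realFieldType) (a0 a1 c0 c1 b0 b1 : R) :
  0 <= a0 -> 0 <= c1 -> 0 <= b0 -> 0 <= b1 -> a0 <= a1 -> c1 < c0 ->
  c0 * b0 <= c1 * b1 -> a0 * b0 <= a1 * b1.
Proof.
move=> a0_ge0 c1_ge0 b0_ge0 b1_ge0 le_a lt_c le_cb.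
have le_b : b0 <= b1.
  rewrite leNgt; apply/negP => lt_b.
  have b0_gt0 : 0 < b0 by exact: le_lt_trans lt_b.
  have := le_trans le_cb (ler_wpM2l c1_ge0 (ltW lt_b)).
  by rewrite leNgt ltr_pM2r // lt_c.
exact: ler_pM.
Qed.

Section Monotonicity.
Variables (R : realFieldType) (Y : finType) (W V : Y -> bool -> R) (n m : nat).
Hypotheses (W_bdmc : is_bdmc W) (V_bdmc : is_bdmc V).

Local Notation lik := (lik V n m).
Local Notation delta := (delta V n m).
Local Notation B_ge := (fun y : {ffun 'I_(2 ^ n.+1) -> Y} => Lge V n m (first_half y)).
Local Notation B_le := (fun y : {ffun 'I_(2 ^ n.+1) -> Y} => Lle V n m (first_half y)).

Lemma lik_nonneg u x : 0 <= lik u x.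
Proof. by apply: lik_ge0; case: V_bdmc. Qed.

(* j = 2m+2, event {L >= 1}: the sections are nested. *)
Lemma plus_ge_mono :
  cond_pos W n.+1 B_ge true -> cond_pos W n.+1 B_ge false ->
  gcond W n.+1 (fun y => Lge V n.+1 m.*2.+1 y) B_ge false <=
  gcond W n.+1 (fun y => Lge V n.+1 m.*2.+1 y) B_ge true.
Proof.
apply: (gcond_left_half_mono (B := fun x => Lge V n m x)
  (A := fun x1 x2 => lik false x1 * lik false x2 <= lik true x1 * lik true x2)) => //.
- by move=> y; rewrite Lge_plus.
- by move=> y; rewrite Lge_left_half.
move=> x x'; rewrite !Lge_lik -ltNge => Bx Bx'.
by apply: prob_sub => // x2; apply: mul_le_transfer; rewrite ?lik_nonneg.
Qed.

Lemma plus_le_mono :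
  cond_pos W n.+1 B_le true -> cond_pos W n.+1 B_le false ->
  gcond W n.+1 (fun y => Lle V n.+1 m.*2.+1 y) B_le false <=
  gcond W n.+1 (fun y => Lle V n.+1 m.*2.+1 y) B_le true.
Proof.
apply: (gcond_left_half_mono (B := fun x => Lle V n m x)
  (A := fun x1 x2 => lik true x1 * lik true x2 <= lik false x1 * lik false x2)) => //.
- by move=> y; rewrite Lle_plus.
- by move=> y; rewrite Lle_left_half.
move=> x x'; rewrite !Lle_lik -ltNge => Bx Bx'.
by apply: prob_sub => // x2; apply: mul_le_transfer; rewrite ?lik_nonneg.
Qed.

Hypothesis Lge_le_Lle : prob W n (fun x => Lge V n m x) <= prob W n (fun x => Lle V n m x).

(* j = 2m+1, event {L >= 1}: the sections of {B = 0} lie in {L(x2) >= 1},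
   those of {B = 1} contain {L(x2) <= 1}. *)
Lemma minus_ge_mono :
  cond_pos W n.+1 B_ge true -> cond_pos W n.+1 B_ge false ->
  gcond W n.+1 (fun y => Lge V n.+1 m.*2 y) B_ge false <=
  gcond W n.+1 (fun y => Lge V n.+1 m.*2 y) B_ge true.
Proof.
apply: (gcond_left_half_mono (B := fun x => Lge V n m x)
  (A := fun x1 x2 => delta x1 * delta x2 <= 0)) => //.
- by move=> y; rewrite Lge_minus.
- by move=> y; rewrite Lge_left_half.
move=> x x'; rewrite !Lge_delta -ltNge => Bx Bx'.
apply: le_trans (le_trans Lge_le_Lle _); apply: prob_sub => // x2.
  by rewrite Lge_delta nmulr_rle0.
by rewrite Lle_delta; exact: mulr_ge0_le0.
Qed.

Lemma minus_le_mono :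
  cond_pos W n.+1 B_le true -> cond_pos W n.+1 B_le false ->
  gcond W n.+1 (fun y => Lle V n.+1 m.*2 y) B_le false <=
  gcond W n.+1 (fun y => Lle V n.+1 m.*2 y) B_le true.
Proof.
apply: (gcond_left_half_mono (B := fun x => Lle V n m x)
  (A := fun x1 x2 => 0 <= delta x1 * delta x2)) => //.
- by move=> y; rewrite Lle_minus.
- by move=> y; rewrite Lle_left_half.
move=> x x'; rewrite !Lle_delta -ltNge => Bx Bx'.
apply: le_trans (le_trans Lge_le_Lle _); apply: prob_sub => // x2.
  by rewrite Lge_delta pmulr_rge0.
by rewrite Lle_delta; exact: mulr_le0.
Qed.

End Monotonicity.

Lemma index_plus (i : nat) : (1 <= i)%N -> (2 * i).-1 = (i.-1).*2.+1.
Proof. by move=> i_gt0; rewrite -mul2n; lia. Qed.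
Lemma index_minus (i : nat) : (1 <= i)%N -> (2 * i - 1).-1 = (i.-1).*2.
Proof. by move=> i_gt0; rewrite -mul2n; lia. Qed.
Theorem proposition6 (R : realFieldType) (Y : finType) (W V : Y -> bool -> R)
    (n i : nat) :
  is_bdmc W -> is_bdmc V -> (1 <= i <= 2 ^ n)%N ->
  (* (a) j = 2i *)
  ((cond_pos W n.+1 (fun y => Lge V n i.-1 (first_half y)) true ->
    cond_pos W n.+1 (fun y => Lge V n i.-1 (first_half y)) false ->
    gcond W n.+1 (fun y => Lge V n.+1 (2 * i).-1 y)
            (fun y => Lge V n i.-1 (first_half y)) false
    <= gcond W n.+1 (fun y => Lge V n.+1 (2 * i).-1 y)
            (fun y => Lge V n i.-1 (first_half y)) true) /\
   (cond_pos W n.+1 (fun y => Lle V n i.-1 (first_half y)) true ->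
    cond_pos W n.+1 (fun y => Lle V n i.-1 (first_half y)) false ->
    gcond W n.+1 (fun y => Lle V n.+1 (2 * i).-1 y)
            (fun y => Lle V n i.-1 (first_half y)) false
    <= gcond W n.+1 (fun y => Lle V n.+1 (2 * i).-1 y)
            (fun y => Lle V n i.-1 (first_half y)) true)) /\
  (* (b) j = 2i - 1 *)
  (prob W n (fun y => Lge V n i.-1 y) <= prob W n (fun y => Lle V n i.-1 y) ->
   (cond_pos W n.+1 (fun y => Lge V n i.-1 (first_half y)) true ->
    cond_pos W n.+1 (fun y => Lge V n i.-1 (first_half y)) false ->
    gcond W n.+1 (fun y => Lge V n.+1 (2 * i - 1).-1 y)
            (fun y => Lge V n i.-1 (first_half y)) false
    <= gcond W n.+1 (fun y => Lge V n.+1 (2 * i - 1).-1 y)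
            (fun y => Lge V n i.-1 (first_half y)) true) /\
   (cond_pos W n.+1 (fun y => Lle V n i.-1 (first_half y)) true ->
    cond_pos W n.+1 (fun y => Lle V n i.-1 (first_half y)) false ->
    gcond W n.+1 (fun y => Lle V n.+1 (2 * i - 1).-1 y)
            (fun y => Lle V n i.-1 (first_half y)) false
    <= gcond W n.+1 (fun y => Lle V n.+1 (2 * i - 1).-1 y)
            (fun y => Lle V n i.-1 (first_half y)) true)).
Proof.
move=> W_bdmc V_bdmc /andP[i_gt0 _].
rewrite index_plus // index_minus //.
split; first by split; [exact: plus_ge_mono | exact: plus_le_mono].
by move=> Lge_le_Lle; split; [exact: minus_ge_mono | exact: minus_le_mono].
Qed.
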